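(* Let $V:\mathbb{R}\to\mathbb{R}$ be convex and $L$-Lipschitz with $m:=e^{-V}$ a probability density, and let $C_V>0$ be a constant such that for all $x\in\mathbb{R}$, $C_V^{-1}\le e^{-V(x)}\big/\min\big(\int_{-\infty}^x e^{-V},\int_x^\infty e^{-V}\big)\le C_V$. Let $0<c<C$ and $f\in\mathcal{P}_{c,C}$. Then the optimal transport map $T$ from $m$ to $f$ satisfies $$\frac{c}{C C_V^2}\le T'\le\frac{C C_V^2}{c}.$$
   Context: $\mathcal{P}_{c,C}:=\{g\in\mathcal{P}(\mathbb{R}):\ c\,m\le g\le C\,m\}$. The optimal transport map (for quadratic cost) from $m$ to $f$ on $\mathbb{R}$ is the monotone map $T=F_f^{-1}\circ F_m$, where $F_m,F_f$ are the cumulative distribution functions. *)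

From HB Require Import structures.
From mathcomp Require Import all_boot all_order all_algebra.
From mathcomp Require Import all_classical all_reals all_analysis.
Set Implicit Arguments. Unset Strict Implicit. Unset Printing Implicit Defensive.
Import Order.TTheory GRing.Theory Num.Theory.
Import numFieldNormedType.Exports.
Local Open Scope classical_set_scope.
Local Open Scope ring_scope.

Definition is_prob_density (R : realType) (g : R -> R) : Prop :=
  [/\ measurable_fun setT g,
      (forall x, 0 <= g x) &
      (\int[lebesgue_measure]_x (g x)%:E = 1)%E].

Definition cdf_of (R : realType) (g : R -> R) (x : R) : R :=
  fine (\int[lebesgue_measure]_(t in `]-oo, x]) (g t)%:E).

Definition upper_tail (R : realType) (g : R -> R) (x : R) : R :=
  fine (\int[lebesgue_measure]_(t in `[x, +oo[) (g t)%:E).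

Definition Pcc (R : realType) (m : R -> R) (c C : R) (g : R -> R) : Prop :=
  is_prob_density g /\ (forall x, c * m x <= g x /\ g x <= C * m x).

Definition convex_fun (R : realType) (V : R -> R) : Prop :=
  forall x y t : R, 0 <= t <= 1 ->
    V (t * x + (1 - t) * y) <= t * V x + (1 - t) * V y.

Definition lipschitz_with (R : realType) (L : R) (V : R -> R) : Prop :=
  forall x y : R, `|V x - V y| <= L * `|x - y|.

(* The monotone map T carries the m-mass of ]a, b] onto the f-mass of
   ]T a, T b].  As V is L-Lipschitz, on an interval of length h the density m
   stays within a factor exp(+-L h) of its value at the left end point, and
   c m <= f <= C m; so T b - T a is (b - a) m(a) / m(T a) up to such factors.
   The tail hypothesis makes m comparable, within C_V, to
   min(F_m, 1 - F_m), and from F_f o T = F_m and c F_m <= F_f <= C F_m (and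
   likewise for the upper tails) this minimum changes by a factor between c
   and C under T; hence c / C_V^2 <= m(a) / m(T a) <= C C_V^2.  Subdividing
   [x, y] into n equal pieces and letting n grow removes the exponential
   factors, which gives the two-sided Lipschitz bounds on T, and the bounds
   on T' follow. *)

From HB Require Import structures.
From mathcomp Require Import all_boot all_order all_algebra.
From mathcomp Require Import all_classical all_reals all_analysis.
From mathcomp Require Import measurable_realfun ring lra.
Set Implicit Arguments.
Unset Strict Implicit.
Unset Printing Implicit Defensive.
Import Order.TTheory GRing.Theory Num.Theory.
Import numFieldNormedType.Exports.
Local Open Scope classical_set_scope.
Local Open Scope ring_scope.

Definition mass {R : realType} (g : R -> R) (A : set R) : R :=
  fine (\int[lebesgue_measure]_(t in A) (g t)%:E)%E.

Section DensityMass.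
Context {R : realType}.
Local Notation mu := (@lebesgue_measure R).
Variable g : R -> R.

Lemma mass_ge0 (A : set R) : (forall t, 0 <= g t) -> 0 <= mass g A.
Proof. by move=> g0; apply/fine_ge0/integral_ge0 => t _; rewrite lee_fin. Qed.

Lemma mass_itv_bounds (a b lo hi : R) : measurable_fun setT g ->
  a <= b -> 0 <= lo -> (forall t, a < t <= b -> lo <= g t <= hi) ->
  lo * (b - a) <= mass g `]a, b] <= hi * (b - a).
Proof.
move=> mg ab lo0 glohi.
have mu_ab : mu `]a, b] = (b - a)%:E.
  by rewrite lebesgue_measure_itv /= lte_fin; case: ltgtP ab => // ->; rewrite subrr.
have bound_cst (k : R) : (k * (b - a))%:E = (\int[mu]_(t in `]a, b]) k%:E)%E.
  by rewrite EFinM -mu_ab -integral_cst.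
have mgab : measurable_fun `]a, b] (EFin \o g).
  by apply/measurable_EFinP; apply: measurable_funS mg.
have lo_le : ((lo * (b - a))%:E <= \int[mu]_(t in `]a, b]) (g t)%:E)%E.
  rewrite bound_cst; apply: ge0_le_integral => //.
  by move=> t /= /[!in_itv] /= /glohi /andP[+ _]; rewrite lee_fin.
have le_hi : (\int[mu]_(t in `]a, b]) (g t)%:E <= (hi * (b - a))%:E)%E.
  rewrite bound_cst; apply: ge0_le_integral => //.
  - by move=> t /= /[!in_itv] /= /glohi /andP[h _]; rewrite lee_fin (le_trans lo0).
  - by move=> t /= /[!in_itv] /= /glohi /andP[_ h]; rewrite lee_fin.
have fin : (\int[mu]_(t in `]a, b]) (g t)%:E)%E \is a fin_num.
  rewrite ge0_fin_numE ?(le_lt_trans le_hi) ?ltry //.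
  by rewrite (le_trans _ lo_le) // lee_fin mulr_ge0 // subr_ge0.
by rewrite -!lee_fin fineK // lo_le le_hi.
Qed.

Hypothesis g_density : is_prob_density g.

Let g_mfun : measurable_fun setT g. Proof. by case: g_density. Qed.
Let g_ge0 t : 0 <= g t. Proof. by case: g_density. Qed.
Let g_int1 : (\int[mu]_t (g t)%:E = 1)%E. Proof. by case: g_density. Qed.

Let g_mfunE (A : set R) : measurable_fun A (EFin \o g).
Proof. by apply/measurable_EFinP; apply: measurable_funS g_mfun. Qed.

Lemma integral_density_fin (A : set R) : measurable A ->
  (\int[mu]_(t in A) (g t)%:E)%E = (mass g A)%:E.
Proof.
move=> mA; have ge0 : (0 <= \int[mu]_(t in A) (g t)%:E)%E.
  by apply: integral_ge0 => t _; rewrite lee_fin.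
have le1 : (\int[mu]_(t in A) (g t)%:E <= 1)%E.
  rewrite -g_int1; apply: ge0_subset_integral => //; first exact: g_mfunE.
  by move=> t _; rewrite lee_fin.
by rewrite /mass fineK // ge0_fin_numE // (le_lt_trans le1) // ltry.
Qed.

Lemma mass_setU (A B : set R) : measurable A -> measurable B -> [disjoint A & B] ->
  mass g (A `|` B) = mass g A + mass g B.
Proof.
move=> mA mB AB; have mAB := measurableU _ _ mA mB; apply: EFin_inj.
rewrite EFinD -!integral_density_fin //.
rewrite (ge0_integral_setU mu mA mB (@g_mfunE (A `|` B))) // => t _.
by rewrite lee_fin.
Qed.

Lemma cdf_of_split (a b : R) : a <= b ->
  cdf_of g b = cdf_of g a + mass g `]a, b].
Proof.
move=> ab; change (mass g `]-oo, b] = mass g `]-oo, a] + mass g `]a, b]).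
rewrite (@itv_bndbnd_setU _ _ _ (BRight a)) // mass_setU //.
by apply/disj_setPLR => t /=; rewrite !in_itv /= => ta; rewrite ltNge ta.
Qed.

Lemma cdf_of_add_upper_tail (x : R) : cdf_of g x + upper_tail g x = 1.
Proof.
rewrite /upper_tail -integral_itv_obnd_cbnd // -/(mass g `]x, +oo[).
rewrite -(@mass_setU `]-oo, x] `]x, +oo[) //; last first.
  by apply/disj_setPLR => t /=; rewrite !in_itv /= andbT => tx; rewrite ltNge tx.
by rewrite itv_setU_setT /mass g_int1.
Qed.

End DensityMass.

Lemma mass_le_scale (R : realType) (g h : R -> R) (k : R) (A : set R) :
  is_prob_density g -> is_prob_density h -> 0 <= k ->
  (forall t, g t <= k * h t) -> measurable A ->
  mass g A <= k * mass h A.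
Proof.
move=> gd hd k0 ghk mA; rewrite -lee_fin EFinM -!integral_density_fin //.
have [mg g0 _] := gd; have [mh h0 _] := hd.
rewrite -ge0_integralZl_EFin //; last 2 first.
- by move=> t _; rewrite lee_fin.
- by apply/measurable_EFinP; apply: measurable_funS mh.
apply: ge0_le_integral => //.
- by move=> t _; rewrite lee_fin.
- by apply/measurable_EFinP; apply: measurable_funS mg.
- apply: emeasurable_funM; first exact: measurable_cst.
  by apply/measurable_EFinP; apply: measurable_funS mh.
- by move=> t _; rewrite lee_fin.
Qed.

Section ExpLimits.
Context {R : realType}.

Lemma le_of_le_mul_expR_invn (u v B : R) : 0 <= v ->
  (forall n, (0 < n)%N -> u <= v * expR (B / n%:R)) -> u <= v.
Proof.
move=> v0 uv; apply/ler_addgt0Pr => e e0.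
move: v0; rewrite le_eqVlt eq_sym => /predU1P[v0|v_gt0].
  by apply: le_trans (uv 1%N isT) _; rewrite v0 mul0r add0r ltW.
set r := ln (1 + e / v).
have r_gt0 : 0 < r by rewrite ln_gt0 // ltrDl divr_gt0.
set n := (Num.truncn (`|B| / r)).+1.
have n_gt0 : 0 < n%:R :> R by rewrite ltr0n.
have Bn_le_r : B / n%:R <= r.
  apply: le_trans (ler_wpM2r _ (ler_norm B)) _; first by rewrite invr_ge0 ltW.
  by rewrite ler_pdivrMr // mulrC -ler_pdivrMr // ltW // truncnS_gt.
apply: (le_trans (uv n isT)).
have -> : v + e = v * expR r by rewrite lnK ?posrE ?addr_gt0 ?divr_gt0 //; field; rewrite gt_eqF.
by rewrite ler_pM2l // ler_expR.
Qed.

Lemma ge_of_mul_expRN_invn_le (u v B : R) : 0 <= v ->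
  (forall n, (0 < n)%N -> v * expR (- (B / n%:R)) <= u) -> v <= u.
Proof.
move=> v0 vu; apply: (@le_of_le_mul_expR_invn _ _ B) => [|n n0].
  by apply: le_trans (vu 1%N isT); rewrite mulr_ge0 // expR_ge0.
by rewrite -ler_pdivrMr ?expR_gt0 // -expRN vu.
Qed.

End ExpLimits.

Section Partition.
Context {R : realType}.
Variables (x y : R) (n : nat).
Hypotheses (xy : x <= y) (n_gt0 : (0 < n)%N).

Lemma partition_increments_le (phi : R -> R) (g : R) :
  (forall a b, x <= a -> b <= y -> b - a = (y - x) / n%:R -> phi b - phi a <= g) ->
  phi y - phi x <= g *+ n.
Proof.
move=> incr_le; set h := (y - x) / n%:R; pose p (j : nat) := x + j%:R * h.
have h_ge0 : 0 <= h by rewrite divr_ge0 ?subr_ge0.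
have pn : p n = y by rewrite /p /h mulrC divfK ?pnatr_eq0 -?lt0n // addrC subrK.
have p0 : p 0%N = x by rewrite /p mul0r addr0.
rewrite -pn -p0 -(@telescope_sumr _ 0 n (phi \o p)) // -[n in g *+ n]subn0.
rewrite -sumr_const_nat; apply: ler_sum_nat => j /andP[_ jn]; apply: incr_le.
- by rewrite /p lerDl mulr_ge0.
- by rewrite -pn /p lerD2l ler_wpM2r // ler_nat.
- by rewrite /p -natr1 -/h; ring.
Qed.

Lemma partition_increments_ge (phi : R -> R) (g : R) :
  (forall a b, x <= a -> b <= y -> b - a = (y - x) / n%:R -> g <= phi b - phi a) ->
  g *+ n <= phi y - phi x.
Proof.
move=> incr_ge.
have neg_incr_le a b : x <= a -> b <= y -> b - a = (y - x) / n%:R ->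
    - phi b - - phi a <= - g.
  by move=> xa bly bah; have := incr_ge a b xa bly bah; lra.
by have := @partition_increments_le (fun t => - phi t) (- g) neg_incr_le; rewrite mulNrn; lra.
Qed.

End Partition.

Section LocalToGlobal.
Context {R : realType}.
Variables (phi : R -> R) (k A x y : R).
Hypotheses (k_ge0 : 0 <= k) (xy : x < y).

Let mul_expR_partition n : (0 < n)%N -> forall s : R,
  k * (y - x) * expR (s * (A * (y - x) / n%:R))
  = (k * ((y - x) / n%:R) * expR (s * (A * ((y - x) / n%:R)))) *+ n.
Proof.
move=> n_gt0 s; rewrite -mulr_natr -[A * _ / _]mulrA.
by field; rewrite pnatr_eq0 -lt0n.
Qed.

Lemma le_of_local_le_mul_expR :
  (forall a b, x <= a -> a < b -> b <= y ->
     phi b - phi a <= k * (b - a) * expR (A * (b - a))) ->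
  phi y - phi x <= k * (y - x).
Proof.
move=> incr_le; apply: (@le_of_le_mul_expR_invn _ _ _ (A * (y - x))).
  by rewrite mulr_ge0 // subr_ge0 ltW.
move=> n n_gt0; have := @mul_expR_partition n n_gt0 1; rewrite !mul1r => ->.
apply: partition_increments_le => // [|a b xa bly bah]; first exact: ltW.
have h_gt0 : 0 < (y - x) / n%:R by rewrite divr_gt0 ?subr_gt0 ?ltr0n.
by rewrite -bah incr_le // -subr_gt0 bah.
Qed.

Lemma ge_of_local_mul_expRN_le :
  (forall a b, x <= a -> a < b -> b <= y ->
     k * (b - a) * expR (- (A * (b - a))) <= phi b - phi a) ->
  k * (y - x) <= phi y - phi x.
Proof.
move=> incr_ge; apply: (@ge_of_mul_expRN_invn_le _ _ _ (A * (y - x))).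
  by rewrite mulr_ge0 // subr_ge0 ltW.
move=> n n_gt0; have := @mul_expR_partition n n_gt0 (-1); rewrite !mulN1r => ->.
apply: partition_increments_ge => // [|a b xa bly bah]; first exact: ltW.
have h_gt0 : 0 < (y - x) / n%:R by rewrite divr_gt0 ?subr_gt0 ?ltr0n.
by rewrite -bah incr_ge // -subr_gt0 bah.
Qed.

End LocalToGlobal.

Lemma derive1_bounds {R : realType} (f : R -> R) (k K x : R) :
  (forall a b, a < b -> k * (b - a) <= f b - f a <= K * (b - a)) ->
  derivable f x 1 -> k <= derive1 f x <= K.
Proof.
move=> fkK df.
have slope_lt a b : a < b -> k <= (f b - f a) / (b - a) <= K.
  move=> ab; have ba_gt0 : 0 < b - a by rewrite subr_gt0.
  by rewrite ler_pdivlMr // ler_pdivrMr // fkK.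
have slope a b : a != b -> k <= (f b - f a) / (b - a) <= K.
  case: (ltgtP a b) => [ab _|ba _|//]; first exact: slope_lt.
  by rewrite -[f b - f a]opprB -[b - a]opprB invrN mulrNN slope_lt.
have quotient_bnd h : h != 0 -> k <= h^-1 * (f (h + x) - f x) <= K.
  move=> h0; rewrite mulrC -[h in _ / h](addrK x).
  by rewrite slope // eq_sym -subr_eq0 addrK.
rewrite derive1E; apply/andP; split.
- apply: limr_ge => //; near=> h.
  have h0 : h != 0 by near: h; exact: nbhs_dnbhs_neq.
  by rewrite [h%:A]mulr1; have /andP[] := quotient_bnd h h0.
- apply: limr_le => //; near=> h.
  have h0 : h != 0 by near: h; exact: nbhs_dnbhs_neq.
  by rewrite [h%:A]mulr1; have /andP[] := quotient_bnd h h0.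
Unshelve. all: end_near.
Qed.

Definition tail_min {R : realType} (g : R -> R) (x : R) : R :=
  Num.min (cdf_of g x) (upper_tail g x).

Section Transport.
Context {R : realType}.
Variables (m f T : R -> R) (L CV c C : R).
Hypotheses (m_density : is_prob_density m) (m_gt0 : forall x, 0 < m x).
Hypotheses (L_ge0 : 0 <= L) (m_logLip : forall s t, m s <= m t * expR (L * `|s - t|)).
Hypotheses (CV_gt0 : 0 < CV) (m_tails : forall x, CV^-1 <= m x / tail_min m x <= CV).
Hypotheses (c_gt0 : 0 < c) (f_Pcc : Pcc m c C f).
Hypothesis T_cdf : forall x, cdf_of f (T x) = cdf_of m x.

Let f_density : is_prob_density f. Proof. by case: f_Pcc. Qed.
Let f_ge x : c * m x <= f x. Proof. by case: f_Pcc => _ /(_ x)[]. Qed.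
Let f_le x : f x <= C * m x. Proof. by case: f_Pcc => _ /(_ x)[]. Qed.
Let f_ge0 t : 0 <= f t. Proof. by case: f_density. Qed.
Let C_gt0 : 0 < C.
Proof.
by rewrite -(pmulr_lgt0 _ (m_gt0 0)) (lt_le_trans _ (le_trans (f_ge 0) (f_le 0))) ?mulr_gt0.
Qed.

Lemma m_itv_bounds a t b : a < t <= b ->
  m a * expR (- (L * (b - a))) <= m t <= m a * expR (L * (b - a)).
Proof.
move=> /andP[lt_at le_tb]; have dist_le : L * `|t - a| <= L * (b - a).
  by rewrite ler_wpM2l // ger0_norm; lra.
apply/andP; split.
- have := m_logLip a t; rewrite -ler_pdivrMr ?expR_gt0 // -expRN.
  by apply: le_trans; rewrite ler_pM2l // ler_expR lerN2 distrC.
- by apply: le_trans (m_logLip t a) _; rewrite ler_pM2l // ler_expR.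
Qed.

Lemma mass_m_bounds a b : a <= b ->
  m a * expR (- (L * (b - a))) * (b - a) <= mass m `]a, b]
  <= m a * expR (L * (b - a)) * (b - a).
Proof.
move=> ab; apply: mass_itv_bounds => //; first by case: m_density.
  by rewrite mulr_ge0 ?expR_ge0 ?ltW.
by move=> t; apply: m_itv_bounds.
Qed.

Lemma mass_f_bounds a b : a <= b ->
  c * (m a * expR (- (L * (b - a)))) * (b - a) <= mass f `]a, b]
  <= C * (m a * expR (L * (b - a))) * (b - a).
Proof.
move=> ab; apply: mass_itv_bounds => //; first by case: f_density.
  by rewrite !mulr_ge0 ?expR_ge0 ?ltW.
move=> t /m_itv_bounds /andP[lo hi]; apply/andP; split.
  by apply: le_trans (f_ge t); rewrite ler_pM2l.
by apply: le_trans (f_le t) _; rewrite ler_pM2l.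
Qed.

Lemma cdf_m_lt a b : a < b -> cdf_of m a < cdf_of m b.
Proof.
move=> ab; rewrite (cdf_of_split m_density (ltW ab)) ltrDl.
have /andP[mass_ge _] := mass_m_bounds (ltW ab).
by apply: lt_le_trans mass_ge; rewrite !mulr_gt0 ?expR_gt0 ?subr_gt0.
Qed.

Lemma T_nondecreasing : {homo T : x y / x <= y}.
Proof.
move=> a b; rewrite le_eqVlt => /predU1P[-> //|ab]; rewrite leNgt; apply/negP => Tba.
have := cdf_of_split f_density (ltW Tba); rewrite !T_cdf.
have := cdf_m_lt ab; have := mass_ge0 `]T b, T a] f_ge0; lra.
Qed.

Lemma mass_transport a b : a <= b -> mass f `]T a, T b] = mass m `]a, b].
Proof.
move=> ab; have := cdf_of_split f_density (T_nondecreasing ab).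
by rewrite !T_cdf (cdf_of_split m_density ab); lra.
Qed.

Lemma tail_min_bounds x : m x <= CV * tail_min m x /\ tail_min m x <= CV * m x.
Proof.
have /andP[CVinv_le le_CV] := m_tails x.
have tail_min_gt0 : 0 < tail_min m x.
  have m_ge0 t : 0 <= m t by exact/ltW.
  have tail_min_ge0 : 0 <= tail_min m x by rewrite le_min !mass_ge0.
  rewrite lt_neqAle tail_min_ge0 andbT; apply/eqP => tail0.
  by move: CVinv_le; rewrite -tail0 invr0 mulr0 leNgt invr_gt0 CV_gt0.
split; first by rewrite -ler_pdivrMr.
rewrite ler_pdivlMr // in CVinv_le.
have CVinv_gt0 : 0 < CV^-1 by rewrite invr_gt0.
by rewrite -(ler_pM2l CVinv_gt0) mulKf ?gt_eqF.
Qed.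

Lemma mass_f_between A : measurable A -> c * mass m A <= mass f A <= C * mass m A.
Proof.
move=> mA; apply/andP; split; last by apply: mass_le_scale => //; exact: ltW.
rewrite -ler_pdivlMl //; apply: mass_le_scale => // [|t]; first by rewrite invr_ge0 ltW.
by rewrite ler_pdivlMl.
Qed.

Lemma tail_min_transport x :
  c * tail_min m (T x) <= tail_min m x <= C * tail_min m (T x).
Proof.
have upper_tail_eq : upper_tail f (T x) = upper_tail m x.
  have := cdf_of_add_upper_tail f_density (T x).
  by rewrite T_cdf -(cdf_of_add_upper_tail m_density x); lra.
have /andP[cdf_ge cdf_le] : c * cdf_of m (T x) <= cdf_of f (T x) <= C * cdf_of m (T x).
  exact: mass_f_between.
have /andP[tail_ge tail_le] :
    c * upper_tail m (T x) <= upper_tail f (T x) <= C * upper_tail m (T x).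
  exact: mass_f_between.
rewrite /tail_min -[cdf_of m x]T_cdf -upper_tail_eq !minr_pMr ?(ltW c_gt0) ?(ltW C_gt0) //.
by rewrite !le_min2.
Qed.

Lemma m_T_ratio x : m x <= C * CV ^+ 2 * m (T x) /\ c * m (T x) <= CV ^+ 2 * m x.
Proof.
have [m_le tail_le] := tail_min_bounds x.
have [mT_le tailT_le] := tail_min_bounds (T x).
have /andP[tail_ge tail_leT] := tail_min_transport x.
split.
- rewrite (_ : _ * m (T x) = CV * (C * (CV * m (T x)))); last by ring.
  apply: le_trans m_le _; rewrite ler_pM2l //; apply: le_trans tail_leT _.
  by rewrite ler_pM2l.
- rewrite (_ : _ * m x = CV * (CV * m x)); last by ring.
  apply: le_trans (ler_wpM2l (ltW c_gt0) mT_le) _.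
  rewrite mulrCA ler_pM2l //; exact: le_trans tail_ge tail_le.
Qed.

Let K := C * CV ^+ 2 / c.
Let CV2_gt0 : 0 < CV ^+ 2. Proof. exact: exprn_gt0. Qed.
Let K_gt0 : 0 < K. Proof. by rewrite !mulr_gt0 ?invr_gt0. Qed.

Lemma T_increment_le a b : a < b ->
  T b - T a <= K * (b - a) * expR (L * ((b - a) + (T b - T a))).
Proof.
move=> ab; have Tab := T_nondecreasing (ltW ab).
have /andP[_ mass_m_le] := mass_m_bounds (ltW ab).
have /andP[mass_f_ge _] := mass_f_bounds Tab.
have [m_le _] := m_T_ratio a.
rewrite (mass_transport (ltW ab)) in mass_f_ge.
set h := b - a in mass_m_le *; set d := T b - T a in mass_f_ge *.
set P := m (T a) in mass_f_ge m_le *.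
have P_gt0 : 0 < P := m_gt0 (T a).
rewrite (mulrDr L) expRD -(ler_pM2l (mulr_gt0 c_gt0 P_gt0)).
have -> : c * P * (K * h * (expR (L * h) * expR (L * d)))
    = C * CV ^+ 2 * P * expR (L * h) * h * expR (L * d).
  by rewrite /K; field; rewrite gt_eqF.
have -> : c * P * d = c * (P * expR (- (L * d))) * d * expR (L * d).
  by rewrite expRN; field; rewrite gt_eqF ?expR_gt0.
apply: ler_wpM2r; first exact: expR_ge0.
apply: le_trans mass_f_ge (le_trans mass_m_le _).
apply: ler_wpM2r; first by rewrite subr_ge0 ltW.
by apply: ler_wpM2r; first exact: expR_ge0.
Qed.

Lemma T_increment_ge a b : a < b ->
  K^-1 * (b - a) * expR (- (L * ((b - a) + (T b - T a)))) <= T b - T a.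
Proof.
move=> ab; have Tab := T_nondecreasing (ltW ab).
have /andP[mass_m_ge _] := mass_m_bounds (ltW ab).
have /andP[_ mass_f_le] := mass_f_bounds Tab.
have [_ mT_le] := m_T_ratio a.
rewrite (mass_transport (ltW ab)) in mass_f_le.
set h := b - a in mass_m_ge *; set d := T b - T a in mass_f_le *.
set Q := m a in mass_m_ge mT_le *; set P := m (T a) in mass_f_le mT_le *.
have d_ge0 : 0 <= d by rewrite subr_ge0.
have Q_gt0 : 0 < Q := m_gt0 a.
have scale_gt0 : 0 < C * CV ^+ 2 * Q * expR (L * d).
  by rewrite !mulr_gt0 ?expR_gt0.
rewrite -(ler_pM2l scale_gt0).
have -> : C * CV ^+ 2 * Q * expR (L * d) * (K^-1 * h * expR (- (L * (h + d))))
    = c * (Q * expR (- (L * h)) * h).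
  rewrite /K (mulrDr L h d) opprD expRD [expR (- (L * d))]expRN.
  by field; rewrite !gt_eqF ?expR_gt0 ?exprn_gt0.
apply: le_trans (ler_wpM2l (ltW c_gt0) (le_trans mass_m_ge mass_f_le)) _.
have -> : c * (C * (P * expR (L * d)) * d) = C * expR (L * d) * d * (c * P) by ring.
have -> : C * CV ^+ 2 * Q * expR (L * d) * d = C * expR (L * d) * d * (CV ^+ 2 * Q).
  by ring.
by apply: ler_wpM2l mT_le; rewrite !mulr_ge0 ?expR_ge0 ?(ltW C_gt0).
Qed.

Lemma T_lipschitz_le x y : x < y -> T y - T x <= K * (y - x).
Proof.
move=> xy; set D := T y - T x; set M := expR (L * ((y - x) + D)).
apply: (le_of_local_le_mul_expR (A := L * (1 + K * M)) (ltW K_gt0) xy).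
move=> a b xa ab bly.
have Txa := T_nondecreasing xa; have Tby := T_nondecreasing bly.
have Kh_ge0 : 0 <= K * (b - a) by rewrite mulr_ge0 ?subr_ge0 ?(ltW K_gt0) ?(ltW ab).
(* a crude a priori bound makes the exponent of [T_increment_le] linear in [b - a] *)
have d_le_KhM : T b - T a <= K * (b - a) * M.
  apply: le_trans (T_increment_le ab) (ler_wpM2l Kh_ge0 _).
  by rewrite ler_expR; apply: ler_wpM2l => //; rewrite /D; lra.
apply: le_trans (T_increment_le ab) (ler_wpM2l Kh_ge0 _).
rewrite ler_expR -mulrA; apply: ler_wpM2l => //.
by rewrite mulrDl mul1r lerD2l mulrAC.
Qed.

Lemma T_lipschitz_ge x y : x < y -> K^-1 * (y - x) <= T y - T x.
Proof.
have Kinv_ge0 : 0 <= K^-1 by rewrite invr_ge0 ltW.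
move=> xy; apply: (ge_of_local_mul_expRN_le (A := L * (1 + K)) Kinv_ge0 xy).
move=> a b xa ab bly.
have Kh_ge0 : 0 <= K^-1 * (b - a).
  by rewrite mulr_ge0 ?subr_ge0 ?(ltW ab).
apply: le_trans (T_increment_ge ab); apply: ler_wpM2l => //.
rewrite ler_expR lerN2 -mulrA; apply: ler_wpM2l => //.
by rewrite mulrDl mul1r lerD2l T_lipschitz_le.
Qed.

Theorem transport_bilipschitz :
  (forall x y, x < y -> K^-1 * (y - x) <= T y - T x <= K * (y - x)) /\
  (forall x, derivable T x 1 -> K^-1 <= derive1 T x <= K).
Proof.
have T_bilip x y : x < y -> K^-1 * (y - x) <= T y - T x <= K * (y - x).
  by move=> xy; rewrite T_lipschitz_ge ?T_lipschitz_le.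
by split=> // x; apply: derive1_bounds.
Qed.

End Transport.

Lemma lipschitz_with_ge0 (R : realType) (L : R) (V : R -> R) :
  lipschitz_with L V -> 0 <= L.
Proof.
by move=> V_lip; have := V_lip 1 0; rewrite subr0 normr1 mulr1; apply: le_trans.
Qed.

Lemma expRN_lipschitz_le (R : realType) (L : R) (V : R -> R) :
  lipschitz_with L V -> forall s t, expR (- V s) <= expR (- V t) * expR (L * `|s - t|).
Proof.
move=> V_lip s t; rewrite -expRD ler_expR.
by have := V_lip s t; rewrite ler_norml => /andP[+ _]; lra.
Qed.

Theorem lemma2p6 (R : realType) (V : R -> R) (L CV c C : R) (f T : R -> R) :
  convex_fun V ->
  lipschitz_with L V ->
  is_prob_density (fun x => expR (- V x)) ->
  0 < CV ->
  (forall x : R,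
     CV^-1 <= expR (- V x) / Num.min (cdf_of (fun t => expR (- V t)) x)
                                      (upper_tail (fun t => expR (- V t)) x)
     <= CV) ->
  0 < c -> c < C ->
  Pcc (fun x => expR (- V x)) c C f ->
  (* T = F_f^{-1} o F_m, i.e. F_f (T x) = F_m x for all x (F_f is injective) *)
  (forall x : R, cdf_of f (T x) = cdf_of (fun t => expR (- V t)) x) ->
  (forall x y : R, x < y ->
     c / (C * CV ^+ 2) * (y - x) <= T y - T x <= C * CV ^+ 2 / c * (y - x)) /\
  (forall x : R, derivable T x 1 ->
     c / (C * CV ^+ 2) <= derive1 T x <= C * CV ^+ 2 / c).
Proof.
move=> _ V_lip m_density CV_gt0 m_tails c_gt0 _ f_Pcc T_cdf.
rewrite -invf_div.
have m_gt0 x : 0 < expR (- V x) by exact: expR_gt0.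
exact: (transport_bilipschitz m_density m_gt0 (lipschitz_with_ge0 V_lip)
  (expRN_lipschitz_le V_lip) CV_gt0 m_tails c_gt0 f_Pcc T_cdf).
Qed.
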